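(* Let $\mathcal A$ be a finite nonempty alphabet, let $\omega\in\mathcal A^{\mathbb N}$ be uniformly recurrent, and let $u\in\mathcal A^+$ be a nonempty finite word. Then $\omega|_u$ is an IP-set if and only if $\omega|_u$ is a central set.
   Context: $\mathbb N=\{0,1,2,\dots\}$. For $\omega=\omega_0\omega_1\omega_2\cdots\in\mathcal A^{\mathbb N}$ and a nonempty finite word $u$, $\omega|_u=\{n\in\mathbb N : \omega_n\omega_{n+1}\cdots\omega_{n+|u|-1}=u\}$ (the set of occurrences of $u$). $\omega$ is uniformly recurrent if for every factor $u$ of $\omega$ the set $\omega|_u$ has bounded gaps. A set $A\subseteq\mathbb N$ is an IP-set if there is a sequence $x_0<x_1<x_2<\cdots$ of natural numbers with $\sum_{n\in F}x_n\in A$ for every nonempty finite $F\subseteq\mathbb N$. $\beta\mathbb N$ is the set of ultrafilters on $\mathbb N$ with addition defined by $A\in p+q$ iff $\{n\in\mathbb N: A-n\in p\}\in q$, where $A-n=\{m: m+n\in A\}$; this makes $\beta\mathbb N$ a compact left-topological semigroup with a smallest two-sided ideal $K(\beta\mathbb N)$. An idempotent is a non-principal ultrafilter $p$ with $p+p=p$; a minimal idempotent is an idempotent lying in $K(\beta\mathbb N)$. A set $A\subseteq\mathbb N$ is central if it belongs to some minimal idempotent. *)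

From mathcomp Require Import all_boot.
Set Implicit Arguments.
Unset Strict Implicit.
Unset Printing Implicit Defensive.

Definition natset := nat -> Prop.

Definition occ (A : Type) (omega : nat -> A) (u : seq A) : natset :=
  fun n => forall i, i < size u -> omega (n + i) = nth (omega 0) u i.

Definition factor (A : Type) (omega : nat -> A) (u : seq A) : Prop :=
  exists n, occ omega u n.

Definition bounded_gaps (S : natset) : Prop :=
  exists L, forall m, exists n, m <= n < m + L /\ S n.

Definition uniformly_recurrent (A : Type) (omega : nat -> A) : Prop :=
  forall u : seq A, factor omega u -> bounded_gaps (occ omega u).

(* IP-set: strictly increasing x with all finite nonempty sums in S.
   Finite nonempty F subset N is represented by a duplicate-free nonempty seq. *)
Definition IP_set (S : natset) : Prop :=
  exists x : nat -> nat, (forall n, x n < x n.+1) /\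
    forall F : seq nat, uniq F -> F <> [::] -> S (\sum_(i <- F) x i).

Record ultrafilter (p : natset -> Prop) : Prop := {
  uf_proper : ~ p (fun _ => False);
  uf_up : forall X Y : natset, p X -> (forall n, X n -> Y n) -> p Y;
  uf_inter : forall X Y : natset, p X -> p Y -> p (fun n => X n /\ Y n);
  uf_ultra : forall X : natset, p X \/ p (fun n => ~ X n)
}.

Definition nonprincipal (p : natset -> Prop) : Prop :=
  forall k, ~ p (fun n => n = k).

Definition shift (X : natset) (n : nat) : natset := fun m => X (m + n).

Definition uf_add (p q : natset -> Prop) : natset -> Prop :=
  fun X => q (fun n => p (shift X n)).

Definition uf_eq (p q : natset -> Prop) : Prop := forall X, p X <-> q X.

Definition two_sided_ideal (I : (natset -> Prop) -> Prop) : Prop :=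
  (exists p, ultrafilter p /\ I p) /\
  (forall p, I p -> ultrafilter p) /\
  (forall p q, I p -> ultrafilter q -> I (uf_add p q) /\ I (uf_add q p)).

(* Membership in the smallest two-sided ideal K(beta N): belonging to every
   two-sided ideal (this intersection is K(beta N), which exists). *)
Definition in_K (p : natset -> Prop) : Prop :=
  ultrafilter p /\ forall I, two_sided_ideal I -> I p.

Definition idempotent (p : natset -> Prop) : Prop :=
  ultrafilter p /\ nonprincipal p /\ uf_eq (uf_add p p) p.

Definition minimal_idempotent (p : natset -> Prop) : Prop :=
  idempotent p /\ in_K p.

Definition central (S : natset) : Prop :=
  exists p, minimal_idempotent p /\ p S.

(* Ultrafilters act on infinite words: (p.x)_i is the letter c such that
   {n | x_(n+i) = c} belongs to p.  This is a right action,
   (p + q).x = q.(p.x), and p contains the occurrence set occ x u exactly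
   when p.x begins with u.

   - Central => IP is the Galvin-Glazer theorem: every member of an
     idempotent ultrafilter is an IP-set.
   - IP => central.  The finite sums of an increasing sequence belong to an
     idempotent p (Ellis-Numakura applied to the closed subsemigroup of
     ultrafilters containing every tail FS(x_n, n >= m)).  Put y = p.omega,
     so that p.y = y, and take a minimal right ideal M inside p + beta N.
     By uniform recurrence every prefix of y reappears in r.y for r in M, so
     {s in M | s.y = y} is a nonempty closed subsemigroup; an idempotent q
     in it is minimal (it lies in the minimal right ideal M) and
     q.omega = y, so q contains occ omega u. *)
From mathcomp Require Import all_boot.
From mathcomp Require classical_sets filter.
From mathcomp Require Import zify.
From Stdlib Require Import FunctionalExtensionality PropExtensionality ClassicalEpsilon Classical.

Set Implicit Arguments.
Unset Strict Implicit.
Unset Printing Implicit Defensive.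

Definition UF := natset -> Prop.

Section UltrafilterFacts.
Variable p : UF.
Hypothesis up : ultrafilter p.

Lemma uf_inhabited X : p X -> exists n, X n.
Proof.
move=> pX; apply: NNPP => H; apply: (uf_proper up).
apply: (uf_up up pX) => n Xn; apply: H; by exists n.
Qed.

Lemma uf_full : p (fun _ => True).
Proof.
case: (uf_ultra up (fun _ => False)) => H; first by case: (uf_proper up).
by apply: (uf_up up H).
Qed.

Lemma uf_compl X : p (fun n => ~ X n) <-> ~ p X.
Proof.
split; last by case: (uf_ultra up X).
move=> H1 H2; apply: (uf_proper up).
by apply: (uf_up up (uf_inter up H1 H2)) => n [].
Qed.

Lemma uf_bigcap_ord (P : nat -> natset) k :
  p (fun n => forall i, i < k -> P i n) <-> forall i, i < k -> p (P i).
Proof.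
split=> [H i ik | H].
  by apply: (uf_up up H) => n; apply.
elim: k H => [|k IH] H; first by apply: (uf_up up uf_full) => n _ i.
have Hk : p (fun n => forall i, i < k -> P i n).
  by apply: IH => i ik; apply: H; exact: ltnW.
apply: (uf_up up (uf_inter up Hk (H k (ltnSn k)))) => n [hk hn] i.
by rewrite ltnS leq_eqVlt => /orP [/eqP ->|/hk].
Qed.

Lemma uf_bigcap_list (l : seq natset) :
  (forall X, List.In X l -> p X) -> p (fun n => forall X, List.In X l -> X n).
Proof.
elim: l => [|Y l IH] H; first by apply: (uf_up up uf_full) => n _ X [].
have h1 := IH (fun X hX => H X (or_intror hX)).
have h2 := H Y (or_introl erefl).
by apply: (uf_up up (uf_inter up h1 h2)) => n [a b] X [<-|/a].
Qed.

Lemma nonprincipal_tail b : nonprincipal p -> p (fun n => b <= n).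
Proof.
move=> np.
have := proj2 (uf_bigcap_ord (fun i n => ~ n = i) b)
  (fun i _ => proj2 (uf_compl _) (np i)).
move=> H; apply: (uf_up up H) => n hn; rewrite leqNgt; apply/negP => nb.
exact: (hn n nb erefl).
Qed.

End UltrafilterFacts.

Lemma uf_ext p q : ultrafilter p -> ultrafilter q -> (forall X, p X -> q X) -> p = q.
Proof.
move=> up uq H; apply: functional_extensionality => X.
apply: propositional_extensionality; split; first exact: H.
move=> qX; apply: NNPP => npX; move/(uf_compl up): npX => /H.
by move/(uf_compl uq).
Qed.

Lemma uf_add_uf p q : ultrafilter p -> ultrafilter q -> ultrafilter (uf_add p q).
Proof.
move=> up uq; split; rewrite /uf_add.
- move=> H; apply: (uf_proper uq); apply: (uf_up uq H) => n; rewrite /shift.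
  by move/(uf_inhabited up) => [].
- move=> X Y H XY; apply: (uf_up uq H) => n; rewrite /shift => h.
  apply: (uf_up up h) => m; exact: XY.
- move=> X Y HX HY; apply: (uf_up uq (uf_inter uq HX HY)) => n [h1 h2].
  exact: (uf_inter up h1 h2).
- move=> X; case: (uf_ultra uq (fun n => p (shift X n))) => H; [left|right] => //.
  apply: (uf_up uq H) => n; rewrite /shift => h; exact/(uf_compl up).
Qed.

Lemma uf_assoc a b c : ultrafilter a -> ultrafilter b -> ultrafilter c ->
  uf_add (uf_add a b) c = uf_add a (uf_add b c).
Proof.
move=> ua ub uc; apply: uf_ext; try by repeat apply: uf_add_uf.
move=> X; rewrite /uf_add => H; apply: (uf_up uc H) => n h.
apply: (uf_up ub h) => m; rewrite /shift => h'.
by apply: (uf_up ua h') => k; rewrite addnA.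
Qed.

Lemma nonprincipal_add p s : ultrafilter p -> ultrafilter s -> nonprincipal p ->
  nonprincipal (uf_add p s).
Proof.
move=> up us np k; rewrite /uf_add => /(uf_inhabited us) [n hn].
apply: (np (k - n)); apply: (uf_up up hn) => m; rewrite /shift => <-.
by rewrite addnK.
Qed.
Lemma fip_ultrafilter (G : natset -> Prop) :
  (forall l : seq natset, (forall X, List.In X l -> G X) ->
     exists n, forall X, List.In X l -> X n) ->
  exists p, ultrafilter p /\ forall X, G X -> p X.
Proof.
move=> HG.
pose F := fun Y : natset => exists l : seq natset, (forall X, List.In X l -> G X) /\
  forall n, (forall X, List.In X l -> X n) -> Y n.
have FF : filter.ProperFilter F.
  split.
    move=> [l [lG ln]]; have [n hn] := HG l lG; exact: (ln n hn).
  split.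
  - by exists [::]; split => // n.
  - move=> Y Z [l1 [h1 h1']] [l2 [h2 h2']]; exists (l1 ++ l2); split.
      by move=> X /List.in_app_iff [/h1|/h2].
    move=> n hn; split; [apply: h1' | apply: h2'] => X hX; apply: hn;
      apply/List.in_app_iff; by [left|right].
  - move=> Y Z YZ [l [h h']]; exists l; split => // n /h'; exact: YZ.
have [G' [UG FG]] := filter.ultraFilterLemma FF.
exists G'; split.
  split.
  - move=> H; apply: (@filter.filter_not_empty _ G' _).
    by apply: (filter.filterS _ H) => n [].
  - move=> X Y H XY; apply: (filter.filterS _ H) => n; exact: XY.
  - move=> X Y hX hY; exact: (filter.filterI hX hY).
  - move=> X; exact: (filter.in_ultra_setVsetC X UG).
move=> X GX; apply: FG; exists [:: X]; split.
  by move=> Y [<-|[]].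
by move=> n /(_ X (or_introl erefl)).
Qed.

Lemma decreasing_ultrafilter (B : nat -> natset) :
  (forall m m' n, m <= m' -> B m' n -> B m n) -> (forall m, exists n, B m n) ->
  exists p, ultrafilter p /\ forall m, p (B m).
Proof.
move=> Bdec Bne.
have [p [up hp]] : exists p, ultrafilter p /\
    forall X, (fun Z => exists m, Z = B m) X -> p X.
  apply: fip_ultrafilter => l hl.
  have [M hM] : exists M, forall Z, List.In Z l -> forall n, B M n -> Z n.
    elim: l hl => [|Z l IH] hl; first by exists 0.
    have [M hM] := IH (fun X hX => hl X (or_intror hX)).
    have [m ->] := hl Z (or_introl erefl).
    exists (maxn M m) => Z' [<-|hZ'] n hn.
      by apply: Bdec hn; exact: leq_maxr.
    by apply: (hM Z' hZ'); apply: Bdec hn; exact: leq_maxl.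
  have [n hn] := Bne M; exists n => Z hZ; exact: hM.
by exists p; split => // m; apply: hp; exists m.
Qed.

Definition uf_family (S : UF -> Prop) := forall s, S s -> ultrafilter s.

Definition closed (S : UF -> Prop) :=
  forall a, ultrafilter a -> (forall X, a X -> exists s, S s /\ s X) -> S a.

Definition meet (C : (UF -> Prop) -> Prop) : UF -> Prop := fun a => forall S, C S -> S a.

Lemma closed_meet C : (forall S, C S -> closed S) -> closed (meet C).
Proof.
move=> cC a ua H S CS; apply: (cC S CS) => // X aX.
have [s [hs sX]] := H X aX; exists s; split => //; exact: hs.
Qed.

Lemma closure_avoids (S : UF -> Prop) a X : uf_family S -> ultrafilter a ->
  (forall Z, (forall s, S s -> s Z) -> a Z) -> ~ (exists s, S s /\ s X) -> ~ a X.
Proof.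
move=> uS ua aS nX; apply/(uf_compl ua); apply: aS => s Ss.
by apply/(uf_compl (uS s Ss)) => sX; apply: nX; exists s.
Qed.

Lemma compactness (S : UF -> Prop) (Y : natset -> Prop) :
  closed S -> uf_family S ->
  (forall l : seq natset, (forall X, List.In X l -> Y X) ->
     exists s, S s /\ forall X, List.In X l -> s X) ->
  exists s, S s /\ forall X, Y X -> s X.
Proof.
move=> cS uS HY.
have [a [ua aG]] : exists a, ultrafilter a /\
    forall X, (Y X \/ forall s, S s -> s X) -> a X.
  apply: fip_ultrafilter => l lG.
  have [l' [l'Y Hl']] : exists l', (forall X, List.In X l' -> Y X) /\
     forall s, S s -> (forall X, List.In X l' -> s X) -> forall X, List.In X l -> s X.
    elim: l lG => [|Z l IH] lG; first by exists [::]; split => // s _ _ X [].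
    have [l' [h1 h2]] := IH (fun X hX => lG X (or_intror hX)).
    case: (lG Z (or_introl erefl)) => [YZ|allZ].
      exists (Z :: l'); split; first by move=> X [<-|/h1].
      move=> s Ss hs X [<-|hX]; first exact: hs (or_introl erefl).
      by apply: (h2 s Ss _ X hX) => X' hX'; apply: hs; right.
    exists l'; split => // s Ss hs X [<-|hX]; first exact: allZ.
    exact: h2.
  have [s [Ss hs]] := HY l' l'Y.
  have := uf_bigcap_list (uS s Ss) (Hl' s Ss hs) => /(uf_inhabited (uS s Ss)) [n hn].
  by exists n.
exists a; split; last by move=> X YX; apply: aG; left.
apply: cS => // X aX; apply: NNPP => nX.
by apply: (closure_avoids uS ua _ nX aX) => Z hZ; apply: aG; right.
Qed.

Definition chain (C : (UF -> Prop) -> Prop) :=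
  forall S T, C S -> C T -> (forall s, S s -> T s) \/ (forall s, T s -> S s).

Lemma chain_meet_inhabited C : (exists S, C S) -> chain C ->
  (forall S, C S -> closed S /\ uf_family S /\ exists s, S s) ->
  exists a, meet C a.
Proof.
move=> [S1 CS1] ch HC.
have [a [ua aG]] : exists a, ultrafilter a /\
    forall X, (exists S, C S /\ forall s, S s -> s X) -> a X.
  apply: fip_ultrafilter => l lG.
  have [S0 [CS0 h]] : exists S0, C S0 /\ forall Z, List.In Z l -> forall s, S0 s -> s Z.
    elim: l lG => [|Z l IH] lG; first by exists S1; split.
    have [S0 [CS0 h]] := IH (fun X hX => lG X (or_intror hX)).
    have [SZ [CSZ hZ]] := lG Z (or_introl erefl).
    case: (ch _ _ CSZ CS0) => inc.
      exists SZ; split => // Z' [<-|hZ'] s Ss; first exact: hZ.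
      exact: h _ hZ' s (inc s Ss).
    exists S0; split => // Z' [<-|hZ'] s Ss; last exact: h.
    exact: hZ s (inc s Ss).
  have [_ [uS0 [s Ss]]] := HC S0 CS0.
  have := uf_bigcap_list (uS0 s Ss) (fun Z hZ => h Z hZ s Ss) => /(uf_inhabited (uS0 s Ss)) [n hn].
  by exists n.
exists a => S CS; have [cS [uS _]] := HC S CS.
apply: cS => // X aX; apply: NNPP => nX.
by apply: (closure_avoids uS ua _ nX aX) => Z hZ; apply: aG; exists S.
Qed.

Definition good (Q : (UF -> Prop) -> Prop) (S : UF -> Prop) :=
  closed S /\ uf_family S /\ (exists s, S s) /\ Q S.

Definition meet_stable (Q : (UF -> Prop) -> Prop) :=
  forall C, (exists S, C S) -> (forall S, C S -> Q S) -> Q (meet C).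

Lemma chain_meet_good Q C : meet_stable Q -> (exists S, C S) -> chain C ->
  (forall S, C S -> good Q S) -> good Q (meet C).
Proof.
move=> HQ Cne ch HC; split; [|split; [|split]].
- by apply: closed_meet => S /HC [].
- move=> s hs; have [S CS] := Cne; have [_ [uS _]] := HC S CS; exact: uS _ (hs S CS).
- by apply: chain_meet_inhabited => // S /HC [c [u [n _]]].
- by apply: HQ => // S /HC [_ [_ [_ q]]].
Qed.

Lemma zorn_minimal Q S0 : meet_stable Q -> good Q S0 ->
  exists M, good Q M /\ (forall s, M s -> S0 s) /\
    forall M', good Q M' -> (forall s, M' s -> M s) -> forall s, M s -> M' s.
Proof.
move=> HQ gS0.
pose T := {S : UF -> Prop | good Q S /\ forall s, S s -> S0 s}.
pose t0 : T := exist _ S0 (conj gS0 (fun s h => h)).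
pose R := fun a b : T => boolp.asbool (forall s, sval b s -> sval a s).
have [t tmax] : exists t, classical_sets.premaximal R t.
  apply: (classical_sets.ZL_preorder t0).
  - by move=> a; apply/boolp.asboolP.
  - move=> a b c /boolp.asboolP h1 /boolp.asboolP h2; apply/boolp.asboolP => s /h2 /h1 //.
  - move=> Af Atot.
    case: (classic (exists a, Af a)) => [[a0 Aa0]|nA]; last first.
      by exists t0 => a Aa; case: nA; exists a.
    pose C := fun S => exists a, Af a /\ sval a = S.
    have Cne : exists S, C S by exists (sval a0), a0.
    have ch : chain C.
      move=> S1 S2 [a [Aa <-]] [b [Ab <-]].
      by case: (Atot a b Aa Ab) => /boolp.asboolP h; [right|left].
    have gC : good Q (meet C).
      by apply: chain_meet_good => // S [a [_ <-]]; case: (svalP a).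
    have CS0 : forall s, meet C s -> S0 s.
      move=> s /(_ _ (ex_intro _ a0 (conj Aa0 erefl))); exact: (proj2 (svalP a0)).
    exists (exist _ (meet C) (conj gC CS0) : T) => a Aa; apply/boolp.asboolP => s /= hs.
    by apply: hs; exists a.
case: t tmax => M [gM MS0] Mmax.
exists M; split => //; split => // M' gM' sub.
have := Mmax (exist _ M' (conj gM' (fun s h => MS0 s (sub s h)))).
by move=> /(_ (boolp.asboolT sub)) /boolp.asboolP.
Qed.

Definition translate (p : UF) (S : UF -> Prop) : UF -> Prop :=
  fun a => exists s, S s /\ a = uf_add p s.

Lemma translate_family p S : ultrafilter p -> uf_family S -> uf_family (translate p S).
Proof. by move=> up uS a [s [Ss ->]]; apply: uf_add_uf => //; exact: uS. Qed.

(* s |-> p + s is continuous, so it maps closed (compact) families to closed ones. *)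
Lemma translate_closed p S : ultrafilter p -> closed S -> uf_family S ->
  closed (translate p S).
Proof.
move=> up cS uS a ua H.
pose Y := fun Z : natset => exists X, a X /\ Z = (fun n => p (shift X n)).
have [s [Ss hs]] : exists s, S s /\ forall Z, Y Z -> s Z.
  apply: compactness => // l lY.
  have [X [aX hX]] : exists X, a X /\ forall Z, List.In Z l -> forall n, p (shift X n) -> Z n.
    elim: l lY => [|Z l IH] lY; first by exists (fun _ => True); split => //; exact: uf_full.
    have [X [aX hX]] := IH (fun X hX => lY X (or_intror hX)).
    have [X' [aX' ->]] := lY Z (or_introl erefl).
    exists (fun n => X n /\ X' n); split; first exact: uf_inter.
    move=> Z' [<-|hZ'] n hn; first by apply: (uf_up up hn) => m [].
    by apply: (hX Z' hZ' n); apply: (uf_up up hn) => m [].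
  have [b [[s [Ss ->]] hb]] := H X aX.
  exists s; split => // Z hZ; apply: (uf_up (uS s Ss) hb) => n; exact: hX.
exists s; split => //; apply: uf_ext => //; first by apply: uf_add_uf => //; exact: uS.
by move=> X aX; apply: hs; exists X.
Qed.

Lemma closed_left_fixers M e : closed M -> uf_family M -> ultrafilter e ->
  closed (fun s => M s /\ uf_add e s = e).
Proof.
move=> cM uM ue a ua H; split.
  by apply: cM => // X /H [s [[Ms _] sX]]; exists s.
apply: esym; apply: uf_ext => //; first exact: uf_add_uf.
move=> X eX; apply: NNPP => nX.
have /H [s [[Ms es] sX]] : a (fun n => ~ e (shift X n)) by apply/(uf_compl ua).
have esX : uf_add e s X by rewrite es.
exact: (proj1 (uf_compl (uM s Ms) _) sX esX).
Qed.

Definition add_closed (S : UF -> Prop) := forall a b, S a -> S b -> S (uf_add a b).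

Lemma add_closed_meet_stable : meet_stable add_closed.
Proof. by move=> C _ HC a b ha hb S CS; apply: HC => //; [exact: ha | exact: hb]. Qed.

(* Ellis-Numakura: a nonempty closed subsemigroup of beta N has an idempotent.
   In a minimal such M, for e in M, e + M = M, and then
   {s in M | e + s = e} = M, so e + e = e. *)
Lemma ellis_numakura S : good add_closed S -> exists e, S e /\ uf_add e e = e.
Proof.
move=> gS.
have [M [[cM [uM [[e Me] sM]]] [MS Mmin]]] := zorn_minimal add_closed_meet_stable gS.
have ue := uM e Me.
have eM_eq : forall s, M s -> translate e M s.
  apply: Mmin; last by move=> s [m [Mm ->]]; exact: sM.
  split; [exact: translate_closed | split; [exact: translate_family|split]].
    by exists (uf_add e e), e.
  move=> a b [m1 [Mm1 ->]] [m2 [Mm2 ->]].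
  exists (uf_add m1 (uf_add e m2)); split; first by apply: (sM) => //; exact: sM.
  by rewrite uf_assoc //; try apply: uf_add_uf; try apply: uM.
have [m0 [Mm0 em0]] := eM_eq e Me.
have fix_eq : forall s, M s -> M s /\ uf_add e s = e.
  apply: Mmin; last by move=> s [].
  split; [exact: closed_left_fixers | split; [by move=> s [/uM]|split]].
    by exists m0; split.
  move=> a b [Ma ea] [Mb eb]; split; first exact: sM.
  by rewrite -uf_assoc ?ea ?eb //; apply: uM.
by exists e; split; [exact: MS | have [_ ->] := fix_eq e Me].
Qed.

Lemma leq_sum_mem (I : eqType) (F : seq I) (f : I -> nat) i :
  i \in F -> f i <= \sum_(k <- F) f k.
Proof. by move=> iF; rewrite (big_rem i iF) /= leq_addr. Qed.

(* With A* = {n in A | A - n in p} (again in p), choose x_k in A_k* increasing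
   and A_(k+1) = A_k /\ (A_k - x_k); all finite sums of the x_i, i >= j,
   then lie in A_j. *)
Section GalvinGlazer.
Variable p : UF.
Hypothesis up : ultrafilter p.
Hypothesis np : nonprincipal p.
Hypothesis ip : uf_eq (uf_add p p) p.

(* A* = {n in A | A - n in p} is in p when A is: A in p + p means
   {n | A - n in p} is in p. *)
Lemma idempotent_star A : p A -> p (fun n => A n /\ p (shift A n)).
Proof. by move=> pA; apply: (uf_inter up pA); apply/(ip A). Qed.

Definition pick_star (A : natset) b :=
  epsilon (inhabits 0) (fun x => b <= x /\ A x /\ p (shift A x)).

Lemma pick_starP A b : p A ->
  b <= pick_star A b /\ A (pick_star A b) /\ p (shift A (pick_star A b)).
Proof.
move=> pA; apply: (epsilon_spec (inhabits 0) (fun x => b <= x /\ A x /\ p (shift A x))).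
have := uf_inter up (nonprincipal_tail up b np) (idempotent_star pA).
by move=> /(uf_inhabited up) [n hn]; exists n.
Qed.

Variable S : natset.
Hypothesis pS : p S.

Fixpoint gg_step (k : nat) : natset * nat :=
  match k with
  | 0 => (S, pick_star S 0)
  | k'.+1 => let: (A, x) := gg_step k' in
      let A' := fun n => A n /\ A (n + x) in (A', pick_star A' x.+1)
  end.

Definition gg_set k := (gg_step k).1.
Definition gg_seq k := (gg_step k).2.

Lemma gg_set_succ k n : gg_set k.+1 n <-> gg_set k n /\ gg_set k (n + gg_seq k).
Proof. by rewrite /gg_set /gg_seq /=; case: (gg_step k). Qed.

Lemma gg_invariant k :
  p (gg_set k) /\ gg_set k (gg_seq k) /\ p (shift (gg_set k) (gg_seq k)).
Proof.
elim: k => [|k [h1 [_ h3]]]; first by have [_ h] := pick_starP 0 pS.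
have hA : p (gg_set k.+1).
  by apply: (uf_up up (uf_inter up h1 h3)) => n /gg_set_succ.
split => //; move: (pick_starP (gg_seq k).+1 hA).
by rewrite /gg_set /gg_seq /=; case: (gg_step k) => A x [].
Qed.

Lemma gg_seq_incr k : gg_seq k < gg_seq k.+1.
Proof.
have := pick_starP (gg_seq k).+1 (proj1 (gg_invariant k.+1)).
by rewrite /gg_set /gg_seq /=; case: (gg_step k) => A x [].
Qed.

Lemma gg_set_decr i j n : i <= j -> gg_set j n -> gg_set i n.
Proof.
move=> /subnK <-; elim: (j - i) n => [|d IH] n //.
by rewrite addSn => /gg_set_succ [/IH].
Qed.

Lemma gg_sums d : forall j (F : seq nat), uniq F -> F <> [::] ->
  (forall i, i \in F -> j <= i < j + d) -> gg_set j (\sum_(i <- F) gg_seq i).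
Proof.
elim: d => [|d IH] j F uF nF hF.
  case: F uF nF hF => [//|i F] _ _ /(_ i (mem_head _ _)).
  by rewrite addn0 => /andP [h1 h2]; move: (leq_trans h2 h1); rewrite ltnn.
have shiftF : forall i, i \in F -> i != j -> j.+1 <= i < j.+1 + d.
  move=> i iF ij; have := hF i iF; rewrite addSnnS => /andP [h1 ->].
  by rewrite ltn_neqAle eq_sym ij h1.
case jF: (j \in F); last first.
  apply: (gg_set_decr (leqnSn j)); apply: IH => // i iF; apply: shiftF => //.
  by apply: contraFneq jF => <-.
rewrite (big_rem j jF) /=.
case F'0: (rem j F) => [|i0 F'].
  by rewrite big_nil addn0; exact: (proj1 (proj2 (gg_invariant j))).
rewrite -F'0; have /gg_set_succ [_] : gg_set j.+1 (\sum_(i <- rem j F) gg_seq i).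
  apply: IH; [exact: rem_uniq | by rewrite F'0 | move=> i].
  by rewrite (mem_rem_uniq _ uF) inE => /andP [ij /shiftF]; apply.
by rewrite addnC.
Qed.

Lemma idempotent_member_IP : IP_set S.
Proof.
exists gg_seq; split; first exact: gg_seq_incr.
move=> F uF nF; apply: (@gg_sums (\sum_(k <- F) k).+1 0) => // i iF.
by rewrite leq0n add0n ltnS (leq_sum_mem id iF).
Qed.

End GalvinGlazer.

Lemma central_IP S : central S -> IP_set S.
Proof. by move=> [p [[[up [np ip]] _] pS]]; exact: (idempotent_member_IP up np ip pS). Qed.

(* Conversely, the finite sums of an increasing sequence x belong to an
   idempotent: the ultrafilters containing every tail FS(x_n, n >= m) form a
   nonempty closed subsemigroup, to which Ellis-Numakura applies. *)
Section FiniteSums.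
Variable x : nat -> nat.
Hypothesis xinc : forall n, x n < x n.+1.

Lemma leq_index_seq i : i <= x i.
Proof. elim: i => [//|i IH]; exact: leq_ltn_trans IH (xinc i). Qed.

Definition FS_tail m : natset := fun n => exists F : seq nat, uniq F /\ F <> [::] /\
  (forall i, i \in F -> m <= i) /\ n = \sum_(i <- F) x i.

Lemma FS_tail_decr m m' n : m <= m' -> FS_tail m' n -> FS_tail m n.
Proof.
move=> mm' [F [uF [nF [hF ->]]]]; exists F; do 3 split => //.
by move=> i /hF; exact: leq_trans mm'.
Qed.

Lemma FS_tail_term m : FS_tail m (x m).
Proof.
exists [:: m]; do 3 split => //; last by rewrite big_seq1.
by move=> i; rewrite inE => /eqP ->.
Qed.

(* If n is a sum with indices >= m, then n' + n is one as soon as n' is a sum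
   with indices > n (and hence > every index of n). *)
Lemma FS_tail_add m n n' : FS_tail m n -> FS_tail n.+1 n' -> FS_tail m (n' + n).
Proof.
move=> [F [uF [nF [hF ->]]]] [G [uG [nG [hG ->]]]].
have Fle : forall i, i \in F -> i <= \sum_(k <- F) x k.
  by move=> i iF; exact: leq_trans (leq_index_seq i) (leq_sum_mem x iF).
exists (G ++ F); split; last split; last split.
- rewrite cat_uniq uG uF andbT /=; apply/hasPn => i iF; apply/negP => iG.
  by have := hG i iG; rewrite ltnNge Fle.
- by case: G nG {uG hG}.
- move=> i; rewrite mem_cat => /orP [/hG h|/hF //].
  have [j jF] : exists j, j \in F.
    by destruct F as [|j F]; [|exists j; exact: mem_head].
  exact: leq_trans (hF j jF) (leq_trans (Fle j jF) (ltnW h)).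
- by rewrite big_cat.
Qed.

Definition FS_ultrafilters : UF -> Prop := fun a => ultrafilter a /\ forall m, a (FS_tail m).

Lemma FS_ultrafilters_good : good add_closed FS_ultrafilters.
Proof.
split; [|split; [by move=> s []|split]].
- move=> a ua H; split => // m; apply: NNPP => nm.
  have /H [s [[us hs] sX]] := proj2 (uf_compl ua _) nm.
  exact: (proj1 (uf_compl us _) sX (hs m)).
- have [a [ua ha]] := decreasing_ultrafilter FS_tail_decr (fun m => ex_intro _ _ (FS_tail_term m)).
  by exists a.
- move=> a b [ua ha] [ub hb]; split; first exact: uf_add_uf.
  move=> m; rewrite /uf_add; apply: (uf_up ub (hb m)) => n hn.
  by apply: (uf_up ua (ha n.+1)) => k hk; exact: FS_tail_add.
Qed.

(* Sums of terms of an increasing sequence are >= the index, so no singleton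
   contains all FS tails. *)
Lemma FS_ultrafilters_nonprincipal a : FS_ultrafilters a -> nonprincipal a.
Proof.
move=> [ua ha] k hk.
have := uf_inter ua hk (ha k.+1) => /(uf_inhabited ua) [n [nk [F [_ [nF [hF nF']]]]]].
case: F nF hF nF' => [//|j F] _ /(_ j (mem_head _ _)) h nF'.
have := leq_trans h (leq_trans (leq_index_seq j) (leq_sum_mem x (mem_head j F))).
by rewrite -nF' nk ltnn.
Qed.

Lemma IP_idempotent (S : natset) :
  (forall F : seq nat, uniq F -> F <> [::] -> S (\sum_(i <- F) x i)) ->
  exists p, ultrafilter p /\ nonprincipal p /\ uf_add p p = p /\ p S.
Proof.
move=> hS; have [e [[ue he] ee]] := ellis_numakura FS_ultrafilters_good.
exists e; split => //; split; first exact: FS_ultrafilters_nonprincipal.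
split => //.
by apply: (uf_up ue (he 0)) => n [F [uF [nF [_ ->]]]]; exact: hS.
Qed.

End FiniteSums.

(* Ultrafilters act on infinite words: (p.x)_i is the letter c such that
   {n | x_(n+i) = c} belongs to p, i.e. p.x is the p-limit of the shifts of x. *)
Section WordAction.
Variable A : finType.

Definition uf_act (p : UF) (x : nat -> A) : nat -> A :=
  fun i => epsilon (inhabits (x 0)) (fun c => p (fun n => x (n + i) = c)).

(* The alphabet is finite, so some letter is p-almost always at position n + i. *)
Lemma uf_letter_exists p (x : nat -> A) i : ultrafilter p ->
  exists c, p (fun n => x (n + i) = c).
Proof.
move=> up; apply: NNPP => H.
have avoid : forall s : seq A, p (fun n => x (n + i) \notin s).
  elim=> [|c s IH]; first by apply: (uf_up up (uf_full up)).
  have Hc : p (fun n => ~ (x (n + i) = c)).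
    by apply/(uf_compl up) => hc; apply: H; exists c.
  apply: (uf_up up (uf_inter up IH Hc)) => n [h1 h2].
  by rewrite in_cons negb_or h1 andbT; apply/eqP.
by have /(uf_inhabited up) [n] := avoid (enum A); rewrite mem_enum.
Qed.

Lemma uf_actP p x i : ultrafilter p -> p (fun n => x (n + i) = uf_act p x i).
Proof. by move=> up; exact: (epsilon_spec _ _ (uf_letter_exists x i up)). Qed.

Lemma uf_actE p x i c : ultrafilter p ->
  uf_act p x i = c <-> p (fun n => x (n + i) = c).
Proof.
move=> up; split=> [<- | H]; first exact: uf_actP.
by have /(uf_inhabited up) [n [<- ->]] := uf_inter up H (uf_actP x i up).
Qed.

Lemma uf_act_add p q x : ultrafilter p -> ultrafilter q ->
  uf_act (uf_add p q) x = uf_act q (uf_act p x).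
Proof.
move=> up uq; apply: functional_extensionality => i.
apply/(uf_actE _ _ _ (uf_add_uf up uq)); rewrite /uf_add.
apply: (uf_up uq (uf_actP (uf_act p x) i uq)) => n /(uf_actE _ _ _ up) h.
by apply: (uf_up up h) => m; rewrite /shift addnA.
Qed.

Lemma uf_act_occ p x (u : seq A) : ultrafilter p ->
  p (occ x u) <-> forall i, i < size u -> uf_act p x i = nth (x 0) u i.
Proof.
move=> up; rewrite /occ (uf_bigcap_ord up (fun i n => x (n + i) = nth (x 0) u i)).
by split=> H i /H; move/(uf_actE _ _ _ up).
Qed.

Lemma uf_act_window p x m k : ultrafilter p ->
  exists n, forall j, j < k -> uf_act p x (m + j) = x (n + j).
Proof.
move=> up.
have := proj2 (uf_bigcap_ord up (fun j n => x (n + (m + j)) = uf_act p x (m + j)) k)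
  (fun j _ => uf_actP x (m + j) up) => /(uf_inhabited up) [n Hn].
by exists (n + m) => j jk; rewrite -addnA Hn.
Qed.

Lemma uf_act_prefixes (y z : nat -> A) :
  (forall k, exists n, forall j, j < k -> z (n + j) = y j) ->
  exists t, ultrafilter t /\ uf_act t z = y.
Proof.
move=> Hpre.
pose B k n := forall j, j < k -> z (n + j) = y j.
have Bdec : forall k k' n, k <= k' -> B k' n -> B k n.
  by move=> k k' n kk' h j jk; apply: h; exact: leq_trans jk kk'.
have [t [ut ht]] := decreasing_ultrafilter Bdec Hpre.
exists t; split => //; apply: functional_extensionality => i.
by apply/(uf_actE _ _ _ ut); apply: (uf_up ut (ht i.+1)) => n; apply.
Qed.

Lemma closed_act_fixers M y : closed M -> uf_family M ->
  closed (fun s => M s /\ uf_act s y = y).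
Proof.
move=> cM uM a ua H; split.
  by apply: cM => // X /H [s [[Ms _] sX]]; exists s.
apply: functional_extensionality => i; apply/(uf_actE _ _ _ ua).
apply: NNPP => /(uf_compl ua) /H [s [[Ms es] sX]].
apply: (proj1 (uf_compl (uM s Ms) _) sX).
by apply/(uf_actE _ _ _ (uM s Ms)); rewrite es.
Qed.

End WordAction.

Definition right_ideal (M : UF -> Prop) :=
  forall r s, M r -> ultrafilter s -> M (uf_add r s).

Lemma right_ideal_meet_stable : meet_stable right_ideal.
Proof. by move=> C _ HC r s hr us S CS; apply: HC => //; exact: hr. Qed.

Lemma principal_right_ideal_good p : ultrafilter p ->
  good right_ideal (translate p ultrafilter).
Proof.
move=> up; split; [exact: translate_closed | split; [exact: translate_family|split]].
  by exists (uf_add p p), p.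
move=> r s [t [ut ->]] us; exists (uf_add t s); split; first exact: uf_add_uf.
by rewrite uf_assoc.
Qed.

(* Inside p + beta N there is a closed right ideal M generated by each of its
   elements: M = r + beta N for all r in M (a minimal right ideal). *)
Lemma minimal_right_ideal p : ultrafilter p -> exists M, good right_ideal M /\
  (forall s, M s -> translate p ultrafilter s) /\
  (forall r s, M r -> M s -> translate r ultrafilter s).
Proof.
move=> up.
have [M [gM [Mp Mmin]]] := zorn_minimal right_ideal_meet_stable (principal_right_ideal_good up).
have [_ [uM [_ idM]]] := gM.
exists M; split => //; split => // r s Mr; apply: Mmin.
- exact: principal_right_ideal_good (uM r Mr).
- by move=> a [t [ut ->]]; exact: idM.
Qed.

(* An element of a minimal right ideal lies in every two-sided ideal, hence
   in K(beta N): for i in I, q + i is in M and in I, and q in (q + i) + beta N. *)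
Lemma minimal_right_ideal_in_K M q : uf_family M -> right_ideal M ->
  (forall r s, M r -> M s -> translate r ultrafilter s) -> M q -> in_K q.
Proof.
move=> uM idM gen Mq; split; first exact: uM.
move=> I [[i [ui Ii]] [_ Iideal]].
have [_ Iqi] := Iideal i q Ii (uM q Mq).
have [w [uw ->]] := gen _ q (idM q i Mq ui) Mq.
exact: (proj1 (Iideal _ w Iqi uw)).
Qed.

Section UniformRecurrence.
Variables (A : finType) (omega : nat -> A).
Hypothesis hur : uniformly_recurrent omega.

(* The prefix is a factor of
   omega, hence occurs in every window of omega of some length L; a window of
   length L + k of r.y is a window of y, hence of omega. *)
Lemma prefix_recurs p r k : ultrafilter p -> ultrafilter r ->
  exists n, forall j, j < k -> uf_act r (uf_act p omega) (n + j) = uf_act p omega j.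
Proof.
move=> up ur; set y := uf_act p omega.
have [n0 hn0] := uf_act_window omega 0 k up.
have fw : factor omega (mkseq y k).
  exists n0 => i; rewrite size_mkseq => ik.
  by rewrite nth_mkseq // -hn0.
have [L hL] := hur fw.
have [a ha] := uf_act_window y 0 (L + k) ur.
have [b hb] := uf_act_window omega a (L + k) up.
have [n [/andP [bn nbL] occn]] := hL b.
exists (n - b) => j jk.
have djL : n - b + j < L + k by lia.
rewrite -[n - b + j]add0n ha // /y hb //.
have -> : b + (n - b + j) = n + j by lia.
by rewrite occn ?size_mkseq // nth_mkseq.
Qed.

(* An idempotent p containing occ omega u yields a minimal idempotent q with
   q.omega = p.omega, which therefore also contains occ omega u. *)
Lemma idempotent_occ_central (u : seq A) p : ultrafilter p -> nonprincipal p ->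
  uf_add p p = p -> p (occ omega u) -> central (occ omega u).
Proof.
move=> up np pp pocc.
set y := uf_act p omega.
have yfix : uf_act p y = y by rewrite /y -uf_act_add // pp.
have [M [[cM [uM [[r Mr] idM]]] [Mp gen]]] := minimal_right_ideal up.
have [t [ut ht]] := uf_act_prefixes (fun k => prefix_recurs k up (uM r Mr)).
have gE : good add_closed (fun s => M s /\ uf_act s y = y).
  split; [exact: closed_act_fixers | split; [by move=> s [/uM] | split]].
  - exists (uf_add r t); split; [exact: idM | by rewrite uf_act_add //; exact: uM].
  - move=> a b [Ma ea] [Mb eb]; split; first by apply: idM => //; exact: uM.
    by rewrite uf_act_add ?ea ?eb //; exact: uM.
have [q [[Mq qy] qq]] := ellis_numakura gE.
have uq := uM q Mq.
have [s [us qps]] := Mp q Mq.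
have q_omega : uf_act q omega = y by move: qy; rewrite qps !uf_act_add // yfix.
exists q; split.
- split; last exact: (minimal_right_ideal_in_K uM idM gen Mq).
  split => //; split; last by rewrite qq.
  by rewrite qps; exact: nonprincipal_add.
- apply/(uf_act_occ _ _ uq) => i iu; rewrite q_omega.
  exact: (proj1 (uf_act_occ _ _ up) pocc i iu).
Qed.

End UniformRecurrence.

Theorem theorem3 (A : finType) (omega : nat -> A) (u : seq A) :
  0 < #|A| -> uniformly_recurrent omega -> u <> [::] ->
  (IP_set (occ omega u) <-> central (occ omega u)).
Proof.
move=> _ hur _; split; last exact: central_IP.
move=> [x [xinc hx]].
have [p [up [np [pp pS]]]] := IP_idempotent xinc hx.
exact: (idempotent_occ_central hur up np pp pS).
Qed.
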